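(* Let $\mathbf b=b_0b_1b_2\cdots\in\{1,-1\}^{\mathbb N}$. For each $t\ge 0$ there is a nonnegative integer $\ell_t$ such that $D_{k,b_k}(\ell_t,\ell_t+2^{t+2}-1)=0$ for all $k\ge t$.
   Context: For $b\in\{-1,1\}$, $k\ge0$ and integers $\ell\le n$, $D_{k,b}(\ell,n)$ denotes the number of integers $i$ with $\ell<i\le n$ and $i\equiv(2+b)\cdot 2^k \pmod{2^{k+2}}$. *)

From mathcomp Require Import all_boot all_order all_algebra.
Set Implicit Arguments. Unset Strict Implicit. Unset Printing Implicit Defensive.
Import Order.TTheory GRing.Theory Num.Theory.
Local Open Scope ring_scope.

(* D_{k,b}(l,n) = #{ i in Z : l < i <= n, i = (2+b) 2^k mod 2^(k+2) },
   for integers l <= n.  The integers i are l + j + 1 for 0 <= j < n - l. *)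
Definition D (k : nat) (b : int) (l n : int) : nat :=
  \sum_(0 <= j < `|n - l|%N)
     ((l + (j.+1)%:Z == (2 + b) * 2 ^+ k %[mod 2 ^+ (k.+2)])%Z : nat).

From mathcomp Require Import all_boot all_order all_algebra.
From mathcomp Require Import zify.
Import Order.TTheory GRing.Theory Num.Theory.

(* Write c_k = 2 + b_k, which lies in {1, 3}.  Every i counted by D_{k,b_k}
   with k >= t is a multiple of 2^t, so in the window 2^t L < i < 2^t (L + 4)
   the only candidates are 2^t (L + j) with j = 1, 2, 3; dividing by 2^t, it
   suffices to find L such that no L + j is congruent to c_(t+d) 2^d modulo
   2^(d+2) for any d.  For d <= 3 these are congruences modulo 4, 8, 16, 32,
   while for d >= 4 they only catch integers >= 16, so a suitable L < 24 can
   be read off c_t, ..., c_(t+3). *)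

Lemma pow2_multiple_modn_neq n c d :
  n < 2 ^ d -> 0 < c < 4 -> n != c * 2 ^ d %[mod 2 ^ d.+2].
Proof.
move=> n_lt /andP[c_gt0 c_lt4].
have cd_lt : c * 2 ^ d < 2 ^ d.+2 by rewrite !expnS mulnA ltn_pmul2r ?expn_gt0.
have n_lt_cd : n < c * 2 ^ d by apply: leq_trans n_lt _; rewrite leq_pmull.
by rewrite !modn_small ?(ltn_trans n_lt_cd) // ltn_eqF.
Qed.

Lemma dvdn_of_eqmod_mul_pow2 {n c t k} :
  t <= k -> n = c * 2 ^ k %[mod 2 ^ k.+2] -> 2 ^ t %| n.
Proof.
move=> t_le_k n_eq.
have t_dvd : 2 ^ t %| 2 ^ k.+2 by rewrite dvdn_exp2l // leqW // leqW.
have := congr1 (modn^~ (2 ^ t)) n_eq; rewrite !(modn_dvdm _ t_dvd) => n_eq_t.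
by rewrite /dvdn n_eq_t -/(dvdn _ _) dvdn_mull // dvdn_exp2l.
Qed.

Section Gap.

Variable s : nat -> nat.
Hypothesis s13 : forall d, s d = 1 \/ s d = 3.

(* Among L + 1, L + 2, L + 3, two odd integers would cover both odd classes
   modulo 4, so L is odd and L + 2 misses the class s_0 iff L = s_0 (mod 4);
   the offset then moves L + 1 and L + 3 out of the remaining forbidden
   classes. *)
Definition gap_base : nat :=
  s 0 + (if s 1 == s 0 then 4 * (7 - 2 * s 3) else 4 * (3 - s 2)).

Lemma gap_base_lt : gap_base < 24.
Proof.
by rewrite /gap_base; case: (s13 0) => ->; case: (s13 1) => ->;
  case: (s13 2) => ->; case: (s13 3) => ->.
Qed.

Lemma gap_base_free d i :
  0 < i < 4 -> gap_base + i != s d * 2 ^ d %[mod 2 ^ d.+2].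
Proof.
move=> /andP[i_gt0 i_lt4].
have [d_ge5 | d_lt5] := leqP 5 d.
  apply: pow2_multiple_modn_neq; last by case: (s13 d) => ->.
  apply: leq_trans (leq_pexp2l (isT : 0 < 2) d_ge5).
  by have := gap_base_lt; lia.
case: d d_lt5 => [|[|[|[|[|//]]]]] _;
  rewrite /gap_base; have [s0|s0] := s13 0; have [s1|s1] := s13 1;
  have [s2|s2] := s13 2; have [s3|s3] := s13 3; have [s4|s4] := s13 4;
  rewrite ?s0 ?s1 ?s2 ?s3 ?s4; by case: i i_gt0 i_lt4 => [|[|[|[|]]]].
Qed.

End Gap.

Lemma scaled_gap_free {c : nat -> nat} (c13 : forall k, c k = 1 \/ c k = 3)
    t k i :
  t <= k -> 0 < i < 2 ^ t.+2 ->
  2 ^ t * gap_base (fun d => c (t + d)) + i != c k * 2 ^ k %[mod 2 ^ k.+2].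
Proof.
move=> t_le_k /andP[i_gt0 i_lt]; apply/negP => /eqP congr_i.
set L := gap_base _ in congr_i.
have /dvdnP[j def_i] : 2 ^ t %| i.
  have := dvdn_of_eqmod_mul_pow2 t_le_k congr_i.
  by rewrite dvdn_addr // dvdn_mulr.
have [d def_k] : exists d, k = t + d by exists (k - t); rewrite subnKC.
have t_gt0 : 0 < 2 ^ t by rewrite expn_gt0.
have j_bounds : 0 < j < 4.
  move: i_gt0 i_lt; rewrite def_i !expnS mulnA muln_gt0 => /andP[j_gt0 _].
  by rewrite ltn_pmul2r // => ->; rewrite j_gt0.
move: congr_i; rewrite def_i def_k -!addnS !expnD mulnCA [j * _]mulnC -mulnDr.
rewrite -!muln_modr => /eqP; rewrite eqn_pmul2l // => /eqP congr_j.
have := @gap_base_free _ (fun e => c13 (t + e)) d _ j_bounds.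
by rewrite congr_j eqxx.
Qed.

Local Open Scope ring_scope.

Theorem lemma5p1 (b : nat -> int) (hb : forall k, b k = 1 \/ b k = -1) (t : nat) :
  exists l : int, 0 <= l /\
    forall k : nat, (t <= k)%N -> D k (b k) l (l + 2 ^+ (t.+2) - 1) = 0%N.
Proof.
pose c k := `|(2 + b k)%R|%N.
have c13 k : c k = 1%N \/ c k = 3%N by rewrite /c; case: (hb k) => ->; [right|left].
have def_c k : 2 + b k = (c k)%:Z by rewrite /c; case: (hb k) => ->.
have pow2z n : (2 : int) ^+ n = (2 ^ n)%N by rewrite -natz natrX.
set L := (2 ^ t * gap_base (fun d => c (t + d)))%N.
exists L%:Z; split=> // k t_le_k.
have window : `|(L%:Z + 2 ^+ t.+2 - 1 - L%:Z)%R|%N = (2 ^ t.+2).-1.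
  by rewrite [L%:Z + _]addrC addrAC addrK pow2z -predn_int // expn_gt0.
rewrite /D window big_nat_cond big1 // => j /andP[/andP[_ j_lt] _].
rewrite def_c !pow2z -PoszM -PoszD !modz_nat eqz_nat.
rewrite (negbTE (scaled_gap_free c13 t k j.+1 t_le_k _)) //.
by move: j_lt; rewrite -ltnS prednK ?expn_gt0.
Qed.
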